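(* Let $\mathbf g:\mathbb{R}^{d_{\mathrm{input}}}\to\mathbb{R}^{M}$ be any $\ell_\infty$-dist net (as defined in the context). Then $\mathbf g$ is 1-Lipschitz with respect to the $\ell_\infty$-norm: for all $\mathbf x_1,\mathbf x_2\in\mathbb{R}^{d_{\mathrm{input}}}$, $$\|\mathbf g(\mathbf x_1)-\mathbf g(\mathbf x_2)\|_\infty\le\|\mathbf x_1-\mathbf x_2\|_\infty .$$
   Context: An $\ell_\infty$-dist neuron with parameters $\theta=\{\mathbf w,b\}$ ($\mathbf w$ a vector, $b\in\mathbb{R}$) computes $u(\mathbf x,\theta)=\|\mathbf x-\mathbf w\|_\infty+b$. An $L$-layer $\ell_\infty$-dist net with hidden widths $d_1,\dots,d_L$ takes $\mathbf x^{(0)}=\mathbf x\in\mathbb{R}^{d_{\mathrm{input}}}$ and computes, for $1\le l\le L$ and $1\le k\le d_l$, $x^{(l)}_k=\|\mathbf x^{(l-1)}-\mathbf w^{(l,k)}\|_\infty+b^{(l,k)}$ with arbitrary real parameters $\mathbf w^{(l,k)}\in\mathbb{R}^{d_{l-1}}$ (where $d_0=d_{\mathrm{input}}$), $b^{(l,k)}\in\mathbb{R}$. With $d_L=M$, the output of the net is $\mathbf g(\mathbf x)=(-x^{(L)}_1,\dots,-x^{(L)}_M)$. *)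

From mathcomp Require Import all_boot all_order all_algebra.
Set Implicit Arguments. Unset Strict Implicit. Unset Printing Implicit Defensive.
Import Order.TTheory GRing.Theory Num.Theory.
Local Open Scope ring_scope.

Definition linf_norm (R : realDomainType) (n : nat) (x : 'I_n -> R) : R :=
  \big[Num.max/0]_(i < n) `|x i|.

Definition dist_neuron (R : realDomainType) (n : nat)
  (w : 'I_n -> R) (b : R) (x : 'I_n -> R) : R :=
  linf_norm (fun i => x i - w i) + b.

(* An l_inf-dist net with widths d 0 = d_input, d 1, ..., d L.
   W l k and B l k are the parameters w^{(l+1,k)}, b^{(l+1,k)} of neuron k
   of layer l+1 (layers are 0-indexed here).  Only l < L is used.
   dist_layers d W B l x = x^{(l)}. *)
Fixpoint dist_layers (R : realDomainType) (d : nat -> nat)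
  (W : forall l : nat, 'I_(d l.+1) -> 'I_(d l) -> R)
  (B : forall l : nat, 'I_(d l.+1) -> R) (l : nat) : ('I_(d 0) -> R) -> ('I_(d l) -> R) :=
  match l with
  | 0 => fun x => x
  | l'.+1 => fun x => fun k => dist_neuron (W l' k) (B l' k) (@dist_layers R d W B l' x)
  end.

Definition dist_net (R : realDomainType) (d : nat -> nat)
  (W : forall l : nat, 'I_(d l.+1) -> 'I_(d l) -> R)
  (B : forall l : nat, 'I_(d l.+1) -> R) (L : nat) (x : 'I_(d 0) -> R) : 'I_(d L) -> R :=
  fun k => - @dist_layers R d W B L x k.

Arguments dist_layers {R d} W B l x _.
Arguments dist_net {R d} W B L x _.

From mathcomp Require Import all_boot all_order all_algebra.
Import Order.TTheory GRing.Theory Num.Theory.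
Local Open Scope ring_scope.

(* A distance neuron x |-> ||x - w|| + b is 1-Lipschitz by the reverse triangle
   inequality, so every layer is nonexpansive for the l_inf distance, hence so
   is their composite, and the final negation does not change distances. *)

Section LinfNorm.

Context {R : realDomainType} {n : nat}.
Implicit Types x y : 'I_n -> R.

Lemma eq_linf_norm x y : x =1 y -> linf_norm x = linf_norm y.
Proof. by move=> eq_xy; apply: eq_bigr => i _; rewrite eq_xy. Qed.

Lemma linf_normN x : linf_norm (fun i => - x i) = linf_norm x.
Proof. by apply: eq_bigr => i _; rewrite normrN. Qed.

Lemma linf_norm_ge0 x : 0 <= linf_norm x.
Proof. exact: bigmax_ge_id. Qed.

Lemma ler_linf_norm x i : `|x i| <= linf_norm x.
Proof. exact: le_bigmax. Qed.

Lemma linf_norm_le x c :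
  0 <= c -> (forall i, `|x i| <= c) -> linf_norm x <= c.
Proof. by move=> c_ge0 le_xc; apply: bigmax_le => // i _. Qed.

Lemma linf_norm_distC x y :
  linf_norm (fun i => x i - y i) = linf_norm (fun i => y i - x i).
Proof. by apply: eq_bigr => i _; rewrite distrC. Qed.

Lemma linf_norm_le_dist x y :
  linf_norm x <= linf_norm (fun i => x i - y i) + linf_norm y.
Proof.
apply: linf_norm_le => [|i]; first by rewrite addr_ge0 ?linf_norm_ge0.
rewrite -[x i](subrK (y i)); apply: le_trans (ler_normD _ _) _.
by rewrite lerD ?(ler_linf_norm (fun i => x i - y i)) ?ler_linf_norm.
Qed.

Lemma linf_norm_lipschitz x y :
  `|linf_norm x - linf_norm y| <= linf_norm (fun i => x i - y i).
Proof.
have := linf_norm_le_dist x y; have := linf_norm_le_dist y x.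
rewrite -linf_norm_distC ler_distl lerBlDr => le_y le_x.
by rewrite addrC le_y addrC le_x.
Qed.

End LinfNorm.

Section DistNet.

Variable R : realDomainType.

Lemma dist_neuron_lipschitz n (w x y : 'I_n -> R) b :
  `|dist_neuron w b x - dist_neuron w b y| <= linf_norm (fun i => x i - y i).
Proof.
rewrite /dist_neuron opprD addrACA subrr addr0.
apply: le_trans (linf_norm_lipschitz _ _) _.
rewrite (@eq_linf_norm _ _ _ (fun i => x i - y i)) // => i.
by rewrite opprB addrA subrK.
Qed.

Variables (d : nat -> nat) (W : forall l : nat, 'I_(d l.+1) -> 'I_(d l) -> R)
  (B : forall l : nat, 'I_(d l.+1) -> R).

Lemma dist_layers_nonexpansive l (x1 x2 : 'I_(d 0) -> R) :
  linf_norm (fun k => dist_layers W B l x1 k - dist_layers W B l x2 k)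
  <= linf_norm (fun i => x1 i - x2 i).
Proof.
elim: l => [//|l IHl]; apply: linf_norm_le => [|k]; first exact: linf_norm_ge0.
exact: le_trans (dist_neuron_lipschitz _ _ _ _ _) IHl.
Qed.

End DistNet.

Theorem fact1 (R : realFieldType) (d : nat -> nat)
  (W : forall l : nat, 'I_(d l.+1) -> 'I_(d l) -> R)
  (B : forall l : nat, 'I_(d l.+1) -> R) (L : nat)
  (x1 x2 : 'I_(d 0%N) -> R) :
  linf_norm (fun k => dist_net W B L x1 k - dist_net W B L x2 k)
  <= linf_norm (fun i => x1 i - x2 i).
Proof.
rewrite (@eq_linf_norm _ _ _ (fun k =>
  - (dist_layers W B L x1 k - dist_layers W B L x2 k))); last first.
  by move=> k; rewrite /dist_net opprD.
by rewrite linf_normN dist_layers_nonexpansive.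
Qed.
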